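(* Let $G$ and $H$ be locally compact second countable groups that are coarsely equivalent. Then there are measurable coarse Lipschitz maps $f\colon G\to H$ and $g\colon H\to G$ such that $f\circ g$ and $g\circ f$ are close to the respective identity maps.
   Context: Metrics on $G$ and $H$ are left-invariant proper continuous metrics (these exist and any two are coarsely equivalent). A map $f\colon (X,d_X)\to(Y,d_Y)$ is coarse Lipschitz if there is a non-decreasing $a\colon[0,\infty)\to[0,\infty)$ with $\lim_{t\to\infty}a(t)=\infty$ and $d_Y(f(x),f(x'))\le a(d_X(x,x'))$ for all $x,x'$. Two maps $f,g\colon X\to Y$ are close if $\sup_{x\in X}d_Y(f(x),g(x))<\infty$. A coarse Lipschitz map $f$ is a coarse equivalence if there is a coarse Lipschitz map $g\colon Y\to X$ with $fg$ and $gf$ close to the identity; $G$ and $H$ are coarsely equivalent if such an $f\colon G\to H$ exists. *)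

From HB Require Import structures.
From mathcomp Require Import all_boot all_order all_algebra.
From mathcomp Require Import monoid.
From mathcomp Require Import all_classical all_reals all_analysis.

Set Implicit Arguments.
Unset Strict Implicit.
Unset Printing Implicit Defensive.

Import Order.TTheory GRing.Theory Num.Theory.
Import numFieldNormedType.Exports.
Local Open Scope classical_set_scope.
Local Open Scope ring_scope.

HB.structure Definition TopGroup := {G of monoid.Group G & Topological G}.
Notation topGroupType := TopGroup.type.

Local Open Scope group_scope.

Definition topological_group (G : topGroupType) : Prop :=
  continuous (fun p : G * G => p.1 * p.2) /\ continuous (fun x : G => x^-1).

Definition lcsc_group (G : topGroupType) : Prop :=
  [/\ topological_group G, hausdorff_space G,
      locally_compact [set: G] & @second_countable G].

Local Close Scope group_scope.

Definition lip_metric (R : realType) (G : topGroupType) (d : G -> G -> R) : Prop :=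
  (forall x y, 0 <= d x y) /\
  (forall x y, d x y = 0 <-> x = y) /\
  (forall x y, d x y = d y x) /\
  (forall x y z, d x z <= d x y + d y z) /\
  (forall x y z, d (z * x)%g (z * y)%g = d x y) /\
  (forall (x : G) (r : R), compact [set y | d x y <= r]) /\
  continuous (fun p : G * G => d p.1 p.2).

Definition coarse_lipschitz (R : realType) (X Y : Type)
    (dX : X -> X -> R) (dY : Y -> Y -> R) (f : X -> Y) : Prop :=
  exists a : R -> R,
    [/\ (forall t, 0 <= t -> 0 <= a t),
        (forall s t, 0 <= s -> s <= t -> a s <= a t),
        (forall M : R, exists T : R, forall t, T <= t -> M <= a t)
      & (forall x x', dY (f x) (f x') <= a (dX x x'))].

Definition close_maps (R : realType) (X Y : Type) (dY : Y -> Y -> R)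
    (f g : X -> Y) : Prop :=
  exists C : R, forall x, dY (f x) (g x) <= C.

Definition coarse_equivalence (R : realType) (X Y : Type)
    (dX : X -> X -> R) (dY : Y -> Y -> R) (f : X -> Y) : Prop :=
  coarse_lipschitz dX dY f /\
  exists g : Y -> X, [/\ coarse_lipschitz dY dX g,
                         close_maps dY (f \o g) id & close_maps dX (g \o f) id].

Definition coarsely_equivalent (R : realType) (X Y : Type)
    (dX : X -> X -> R) (dY : Y -> Y -> R) : Prop :=
  exists f : X -> Y, coarse_equivalence dX dY f.

Definition borel_set (T : topologicalType) : set (set T) := <<s @open T >>.

Definition borel_measurable (T U : topologicalType) (f : T -> U) : Prop :=
  forall B : set U, borel_set B -> borel_set (f @^-1` B).

(* A coarse equivalence can be perturbed by a bounded amount without losing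
   any of its coarse properties, so it suffices to precompose it with a Borel
   map s that moves points by less than 1.  By second countability and
   continuity of the metric there is a sequence (p n) whose unit balls cover
   the group; sending x to p n for the first n whose ball contains x is such
   a map: it takes countably many values and its fibres, the disjointified
   balls, are Borel, so h \o s is Borel for every h. *)
From HB Require Import structures.
From mathcomp Require Import all_boot all_order all_algebra.
From mathcomp Require Import monoid.
From mathcomp Require Import all_classical all_reals all_analysis.
From mathcomp Require Import lra.

Set Implicit Arguments.
Unset Strict Implicit.
Unset Printing Implicit Defensive.

Import Order.TTheory GRing.Theory Num.Theory.
Import numFieldNormedType.Exports.
Local Open Scope classical_set_scope.
Local Open Scope ring_scope.

Definition pseudometric (R : realType) (X : Type) (d : X -> X -> R) : Prop :=
  [/\ forall x y, 0 <= d x y, forall x y, d x y = d y x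
    & forall x y z, d x z <= d x y + d y z].

Lemma lip_metric_pseudometric (R : realType) (G : topGroupType) (d : G -> G -> R) :
  lip_metric d -> pseudometric d.
Proof. by case=> d0 [_ [dC [dT _]]]. Qed.

Section CoarseMaps.
Variable R : realType.

Lemma coarse_lipschitz_id (X : Type) (d : X -> X -> R) : coarse_lipschitz d d id.
Proof. by exists id; split=> // M; exists M. Qed.

Lemma coarse_lipschitz_comp (X Y Z : Type) (dX : X -> X -> R) (dY : Y -> Y -> R)
    (dZ : Z -> Z -> R) (f : X -> Y) (g : Y -> Z) :
  (forall y y', 0 <= dY y y') ->
  coarse_lipschitz dX dY f -> coarse_lipschitz dY dZ g ->
  coarse_lipschitz dX dZ (g \o f).
Proof.
move=> dY0 [a [a0 am ainf af]] [b [b0 bm binf bg]].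
exists (b \o a); split=> /=.
- by move=> t t0; exact/b0/a0.
- by move=> s t s0 st; apply: bm; [exact: a0 | exact: am].
- move=> M; have [Tb hb] := binf M; have [Ta ha] := ainf Tb.
  by exists Ta => t /ha; exact: hb.
- by move=> x x'; apply: le_trans (bg _ _) _; exact: bm.
Qed.

Lemma coarse_lipschitz_close (X Y : Type) (dX : X -> X -> R) (dY : Y -> Y -> R)
    (f f' : X -> Y) :
  pseudometric dY -> close_maps dY f f' ->
  coarse_lipschitz dX dY f' -> coarse_lipschitz dX dY f.
Proof.
move=> [_ dC dT] [C fC] [a [a0 am ainf af]].
exists (fun t => a t + `|C| *+ 2); split.
- by move=> t t0; rewrite addr_ge0 ?a0.
- by move=> s t s0 st; rewrite lerD2r am.
- move=> M; have [T hT] := ainf M; exists T => t /hT Mt.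
  by rewrite (le_trans Mt) // lerDl.
- move=> x x'; have := dT (f x) (f' x) (f x'); have := dT (f' x) (f' x') (f x').
  have := fC x; have := fC x'; have := af x x'; rewrite (dC (f' x')).
  have := ler_norm C; lra.
Qed.

Lemma close_maps_trans (X Y : Type) (dY : Y -> Y -> R) (f g h : X -> Y) :
  pseudometric dY -> close_maps dY f g -> close_maps dY g h -> close_maps dY f h.
Proof.
move=> [_ _ dT] [C fgC] [D ghD]; exists (C + D) => x.
by rewrite (le_trans (dT _ (g x) _)) ?lerD.
Qed.

Lemma close_maps_compr (W X Y : Type) (dY : Y -> Y -> R) (f g : X -> Y)
    (k : W -> X) :
  close_maps dY f g -> close_maps dY (f \o k) (g \o k).
Proof. by move=> [C fgC]; exists C => w; exact: fgC. Qed.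

Lemma close_maps_compl (X Y Z : Type) (dY : Y -> Y -> R) (dZ : Z -> Z -> R)
    (f g : X -> Y) (h : Y -> Z) :
  (forall y y', 0 <= dY y y') -> coarse_lipschitz dY dZ h ->
  close_maps dY f g -> close_maps dZ (h \o f) (h \o g).
Proof.
move=> dY0 [b [_ bm _ bh]] [C fgC]; exists (b C) => x.
by apply: le_trans (bh _ _) _; exact: bm.
Qed.

Lemma coarse_lipschitz_comp_close_id (X Y : Type) (dX : X -> X -> R)
    (dY : Y -> Y -> R) (s : X -> X) (f : X -> Y) :
  pseudometric dX -> close_maps dX s id ->
  coarse_lipschitz dX dY f -> coarse_lipschitz dX dY (f \o s).
Proof.
move=> pX sC fL; apply: coarse_lipschitz_comp fL; first by case: pX.
exact: coarse_lipschitz_close sC (coarse_lipschitz_id dX).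
Qed.

Lemma close_maps_comp_close_id (X Y : Type) (dX : X -> X -> R) (dY : Y -> Y -> R)
    (f : X -> Y) (g : Y -> X) (s : X -> X) (t : Y -> Y) :
  pseudometric dX -> pseudometric dY ->
  close_maps dX s id -> close_maps dY t id ->
  coarse_lipschitz dY dX g -> close_maps dX (g \o f) id ->
  close_maps dX ((g \o t) \o (f \o s)) id.
Proof.
move=> pX [dY0 _ _] sC tC gL gfC.
have gtfs : close_maps dX (g \o (t \o (f \o s))) (g \o (f \o s)).
  exact/(close_maps_compl dY0 gL)/(close_maps_compr (f \o s) tC).
apply: (close_maps_trans pX gtfs); apply: (close_maps_trans pX _ sC).
exact: close_maps_compr s gfC.
Qed.

End CoarseMaps.

Section BorelSets.
Variable T : topologicalType.
Implicit Types A B : set T.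

Lemma borel_set0 : borel_set (@set0 T).
Proof. exact: sigma_algebra0. Qed.

Lemma borel_set_open A : open A -> borel_set A.
Proof. exact: sub_sigma_algebra. Qed.

Lemma borel_setC A : borel_set A -> borel_set (~` A).
Proof. by rewrite -setTD; exact: sigma_algebraCD. Qed.

Lemma borel_bigcup (F : (set T)^nat) :
  (forall n, borel_set (F n)) -> borel_set (\bigcup_n F n).
Proof. exact: sigma_algebra_bigcup. Qed.

Lemma borel_bigcup_in (P : set nat) (F : (set T)^nat) :
  (forall n, borel_set (F n)) -> borel_set (\bigcup_(n in P) F n).
Proof.
move=> bF; rewrite bigcup_mkcond; apply: borel_bigcup => n.
by case: ifP => _; [exact: bF | exact: borel_set0].
Qed.

Lemma borel_setU A B : borel_set A -> borel_set B -> borel_set (A `|` B).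
Proof.
move=> bA bB; rewrite -bigcup2E.
by apply: borel_bigcup => -[|[|n]] //=; exact: borel_set0.
Qed.

Lemma borel_setD A B : borel_set A -> borel_set B -> borel_set (A `\` B).
Proof.
move=> bA bB; rewrite setDE -[A]setCK -setCU.
by apply: borel_setC; apply: borel_setU => //; exact: borel_setC.
Qed.

Lemma borel_seqDU (F : (set T)^nat) n :
  (forall n, borel_set (F n)) -> borel_set (seqDU F n).
Proof.
move=> bF; rewrite /seqDU -bigcup_mkord.
by apply: borel_setD => //; exact: borel_bigcup_in.
Qed.

Lemma exists_seqDU_index (F : (set T)^nat) :
  (forall x, exists n, F n x) -> exists idx : T -> nat, forall x, seqDU F (idx x) x.
Proof.
move=> Fcover; have /choice[idx idxP] : forall x, exists n, seqDU F n x.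
  move=> x; have [n Fnx] := Fcover x.
  have : (\bigcup_n F n) x by exists n.
  by rewrite seqDU_bigcup_eq => -[m _ Fmx]; exists m.
by exists idx.
Qed.

Lemma borel_measurable_seqDU_index (U : topologicalType) (F : (set T)^nat)
    (idx : T -> nat) (u : nat -> U) :
  (forall n, borel_set (F n)) -> (forall x, seqDU F (idx x) x) ->
  borel_measurable (u \o idx).
Proof.
move=> bF idxP B _.
have -> : (u \o idx) @^-1` B = \bigcup_(n in [set n | B (u n)]) seqDU F n.
  apply/seteqP; split=> [x Bx | x [n Bn Fnx]]; first by exists (idx x).
  suff idxn : idx x = n by rewrite /= idxn.
  by apply: (@trivIset_seqDU _ F) => //; exists x; split.
by apply: borel_bigcup_in => n; exact: borel_seqDU.
Qed.

End BorelSets.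

Section Discretization.
Variables (R : realType) (T : topologicalType) (d : T -> T -> R).
Hypothesis d_cont : continuous (fun q : T * T => d q.1 q.2).

Lemma continuous_dist_l y : continuous (d^~ y).
Proof.
move=> x; apply: (@continuous_comp _ _ _ (fun z => (z, y)) (fun q => d q.1 q.2)).
  exact: cvg_pair cvg_id (cvg_cst _).
exact: d_cont.
Qed.

Lemma continuous_dist_r x : continuous (d x).
Proof.
move=> y; apply: (@continuous_comp _ _ _ (fun z => (x, z)) (fun q => d q.1 q.2)).
  exact: cvg_pair (cvg_cst _) cvg_id.
exact: d_cont.
Qed.

Lemma open_dist_lt x r : open [set y | d x y < r].
Proof.
apply: (open_comp (f := d x) (D := [set t : R | t < r])); last exact: open_lt.
by move=> y _; exact: continuous_dist_r.
Qed.

Hypotheses (d_refl : forall x, d x x = 0) (T_sc : @second_countable T).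
Variables (x0 : T) (r : R).
Hypothesis r_gt0 : 0 < r.

Lemma second_countable_net : exists p : nat -> T, forall x, exists n, d (p n) x < r.
Proof.
case: T_sc => B /countable_injP[code code_inj] [_ Bbasis].
pose p n := xget x0 [set y | exists U, [/\ B U, code U = n & U y]].
exists p => x.
have near_x : nbhs x [set y | d y x < r].
  apply: (@continuous_dist_l x x [set t : R | t < r]).
  by rewrite d_refl; apply: open_nbhs_nbhs; split; [exact: open_lt | exact: r_gt0].
have [U [BU Ux] U_near] := Bbasis x _ near_x.
exists (code U).
have : exists y, exists U', [/\ B U', code U' = code U & U' y] by exists x, U.
move/(xgetPex x0) => [U' [BU' codeU' U'p]].
have U'U : U' = U by apply: code_inj; rewrite ?inE.
by rewrite U'U in U'p; exact: U_near U'p.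
Qed.

Lemma borel_discretization : exists s : T -> T,
  (forall x, d (s x) x < r) /\
  forall (U : topologicalType) (h : T -> U), borel_measurable (h \o s).
Proof.
have [p p_net] := second_countable_net.
pose ball n := [set x | d (p n) x < r].
have bball n : borel_set (ball n) by apply: borel_set_open; exact: open_dist_lt.
have [idx idxP] := @exists_seqDU_index _ ball p_net.
exists (p \o idx); split; first by move=> x; exact: subset_seqDU (idxP x).
by move=> U h; exact: (@borel_measurable_seqDU_index _ U ball idx (h \o p) bball idxP).
Qed.

End Discretization.

Lemma lcsc_borel_discretization (R : realType) (G : topGroupType) (d : G -> G -> R) :
  lcsc_group G -> lip_metric d ->
  exists s : G -> G, close_maps d s id /\
    forall (U : topologicalType) (h : G -> U), borel_measurable (h \o s).
Proof.
move=> [_ _ _ Gsc] [_ [dE [_ [_ [_ [_ dcont]]]]]].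
have d_refl x : d x x = 0 by exact/dE.
have [s [sd sB]] := borel_discretization dcont d_refl Gsc 1%g ltr01.
by exists s; split=> //; exists 1 => x; exact/ltW.
Qed.

Theorem lemma4p1 (R : realType) (G H : topGroupType)
    (dG : G -> G -> R) (dH : H -> H -> R) :
  lcsc_group G -> lcsc_group H -> lip_metric dG -> lip_metric dH ->
  coarsely_equivalent dG dH ->
  exists (f : G -> H) (g : H -> G),
    borel_measurable f /\ borel_measurable g /\
    coarse_lipschitz dG dH f /\ coarse_lipschitz dH dG g /\
    close_maps dH (f \o g) id /\ close_maps dG (g \o f) id.
Proof.
move=> lG lH mG mH [f [fL [g [gL fgC gfC]]]].
have [s [sC sB]] := lcsc_borel_discretization lG mG.
have [t [tC tB]] := lcsc_borel_discretization lH mH.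
have pG := lip_metric_pseudometric mG; have pH := lip_metric_pseudometric mH.
exists (f \o s), (g \o t); split; first exact: sB.
split; first exact: tB.
split; first exact: coarse_lipschitz_comp_close_id.
split; first exact: coarse_lipschitz_comp_close_id.
split; first exact: (close_maps_comp_close_id pH pG tC sC fL fgC).
exact: (close_maps_comp_close_id pG pH sC tC gL gfC).
Qed.
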